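(* Let $f : 2^V \to \mathbb{Z}_{\ge 0}$ be a connectivity function. If $W \subseteq V$ is a set with $f(W) > 2\,\mathtt{bw}(f)$, then there exists a tripartition $(C_1,C_2,C_3)$ of $V$ (parts may be empty) such that for each $i\in\{1,2,3\}$: $f(C_i) < f(W)/2$, $f(C_i\cap W) < f(W)$, and $f(C_i \cap (V\setminus W)) < f(W)$.
   Context: $V$ is a finite set. A function $f:2^V\to\mathbb{Z}_{\ge 0}$ is a connectivity function if $f(\emptyset)=0$, $f(X)=f(V\setminus X)$ for all $X\subseteq V$, and $f(X\cup Y)+f(X\cap Y)\le f(X)+f(Y)$ for all $X,Y\subseteq V$. A branch decomposition of $f$ is a pair $(T,L)$ where $T$ is a tree whose nodes have degree 1 or 3 and $L$ is a bijection from $V$ to the leaves of $T$ (such exist only when $|V|\ge 2$). Each edge $e$ of $T$ induces, via the components of $T-e$, a bipartition $(X,V\setminus X)$ of $V$, and its width is $f(X)$. The width of $(T,L)$ is the maximum edge width, and $\mathtt{bw}(f)$, the branchwidth of $f$, is the minimum width of a branch decomposition of $f$. A tripartition of $V$ is an ordered triple of pairwise disjoint sets (possibly empty) whose union is $V$. *)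

From mathcomp Require Import all_boot.
Set Implicit Arguments. Unset Strict Implicit. Unset Printing Implicit Defensive.

Definition connectivity_function (V : finType) (f : {set V} -> nat) : Prop :=
  [/\ f set0 = 0%N,
      (forall X : {set V}, f X = f (~: X)) &
      (forall X Y : {set V}, f (X :|: Y) + f (X :&: Y) <= f X + f Y)%N].

Definition del_edge (N : finType) (e : rel N) (u v : N) : rel N :=
  fun a b => e a b && ~~ (((a == u) && (b == v)) || ((a == v) && (b == u))).

(* A finite tree: symmetric irreflexive adjacency relation, connected, acyclic
   (every edge is a bridge, i.e. no edge lies on a cycle). *)
Definition is_tree (N : finType) (e : rel N) : Prop :=
  [/\ symmetric e, irreflexive e,
      (forall x y : N, connect e x y) &
      (forall u v : N, e u v -> ~~ connect (del_edge e u v) u v)].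

Definition degree (N : finType) (e : rel N) (x : N) : nat := #|[set y | e x y]|.

Definition branch_decomposition (V N : finType) (e : rel N) (L : V -> N) : Prop :=
  [/\ is_tree e,
      (forall x : N, degree e x = 1%N \/ degree e x = 3%N),
      injective L &
      (forall x : N, degree e x = 1%N <-> exists v : V, L v = x)].

Definition edge_side (V N : finType) (e : rel N) (L : V -> N) (u v : N) : {set V} :=
  [set x | connect (del_edge e u v) u (L x)].

Definition bd_width (V N : finType) (f : {set V} -> nat) (e : rel N) (L : V -> N) : nat :=
  \max_(p : N * N | e p.1 p.2) f (edge_side e L p.1 p.2).

Definition is_branchwidth (V : finType) (f : {set V} -> nat) (k : nat) : Prop :=
  (exists (N : finType) (e : rel N) (L : V -> N),
      branch_decomposition e L /\ bd_width f e L = k) /\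
  (forall (N : finType) (e : rel N) (L : V -> N),
      branch_decomposition e L -> (k <= bd_width f e L)%N).

From mathcomp Require Import all_boot.
From mathcomp Require Import zify.

(* Call X heavy if f (X :&: W) >= f W or f (X :&: ~: W) >= f W.  In a branch
   decomposition of width k with 2k < f W, submodularity forbids both sides of
   an edge from being heavy, and the side of a leaf, a singleton, is never heavy.
   Walk from an edge into its heavy side: at the internal node reached, either one
   of the two sides pointing away from the walk is heavy, and the walk continues
   on a strictly smaller side, or the three sides around the node are all light
   and form the tripartition.  If no side of the first edge is heavy, its two
   sides together with the empty set do. *)

Set Implicit Arguments.
Unset Strict Implicit.
Unset Printing Implicit Defensive.

Lemma connect_ind_from (T : finType) (r : rel T) (x : T) (P : T -> Prop) :
  P x -> (forall y z, connect r x y -> P y -> r y z -> P z) ->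
  forall y, connect r x y -> P y.
Proof.
move=> Px IH y /connectP [p pth ->].
elim/last_ind: p pth => [//|p z IHp].
rewrite rcons_path => /andP[pp rz]; rewrite last_rcons.
apply: (IH (last x p)) => //; last exact: IHp.
by apply/connectP; exists p.
Qed.

Lemma del_edgeC (N : finType) (e : rel N) u v : del_edge e u v =2 del_edge e v u.
Proof. by move=> a b; rewrite /del_edge orbC. Qed.

Lemma del_edge_sym (N : finType) (e : rel N) u v :
  symmetric e -> symmetric (del_edge e u v).
Proof.
move=> se a b; rewrite /del_edge se; congr (_ && ~~ _).
by rewrite (andbC (b == u)) (andbC (b == v)) orbC.
Qed.

Lemma del_edgeP (N : finType) (e : rel N) u v y z : e y z ->
  [\/ y = u /\ z = v, y = v /\ z = u | del_edge e u v y z].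
Proof.
move=> eyz.
have [/orP[]/andP[/eqP-> /eqP->]|cut] :=
  boolP ((y == u) && (z == v) || (y == v) && (z == u)).
- by constructor 1.
- by constructor 2.
- by constructor 3; rewrite /del_edge eyz cut.
Qed.

Lemma card3_setD1 (T : finType) (A : {set T}) (v : T) :
  #|A| = 3 -> v \in A ->
  exists a b, [/\ a != v, b != v, a != b & A = [set v; a; b]].
Proof.
move=> A3 vA; have /cards2P[a [b [ab Eab]]] : #|A :\ v| == 2.
  by move: A3; rewrite (cardsD1 v) vA add1n => -[->].
have : a \in A :\ v /\ b \in A :\ v by rewrite Eab !inE !eqxx orbT.
rewrite !inE => -[/andP[av _] /andP[bv _]]; exists a, b; split=> //.
by rewrite -(setD1K vA) Eab setUA.
Qed.

Section Tree.
Variables (N : finType) (e : rel N).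
Hypothesis tree_e : is_tree e.

Definition side (u v : N) : {set N} := [set z | connect (del_edge e u v) u z].

Lemma mem_side u v : u \in side u v.
Proof. by rewrite inE connect0. Qed.

Lemma sideC u v : e u v -> side v u = ~: side u v.
Proof.
case: tree_e => se _ ce acyclic euv; apply/setP => z.
rewrite !inE (eq_connect (del_edgeC e v u)).
have [uz|not_uz] /= := boolP (connect (del_edge e u v) u z).
  apply/negP => vz; move: (acyclic u v euv).
  by rewrite (connect_trans uz) // (sym_connect_sym (del_edge_sym u v se)).
have : connect (del_edge e u v) u z || connect (del_edge e u v) v z.
  move: z {not_uz} (ce u z); apply: connect_ind_from => [|y z _ IH eyz].
    by rewrite connect0.
  case: (del_edgeP u v eyz) => [[_ ->]|[_ ->]|Dyz]; [by rewrite connect0 orbT | by rewrite connect0 |].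
  by case/orP: IH => c; apply/orP; [left|right]; apply: connect_trans c (connect1 Dyz).
by rewrite (negbTE not_uz).
Qed.

Lemma side_nested x y1 y2 :
  e x y1 -> e x y2 -> y1 != y2 -> side y1 x \subset side x y2.
Proof.
case: tree_e => se ie _ acyclic exy1 exy2 y12; apply/subsetP => w; rewrite !inE.
have xy2 : x != y2 by apply: contraTneq exy2 => <-; rewrite ie.
move: w; apply: connect_ind_from => [|y z y1y IH dyz].
  by apply: connect1; rewrite /del_edge exy1 !eqxx (negbTE y12) (negbTE xy2).
case: (del_edgeP x y2 (andP dyz).1) => [[Ey ->]|[_ ->]|Dyz].
- by rewrite Ey in y1y; move: (acyclic y1 x); rewrite se exy1 y1y => /(_ isT).
- exact: connect0.
- exact: connect_trans IH (connect1 Dyz).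
Qed.

Lemma side_disjoint x y1 y2 :
  e x y1 -> e x y2 -> y1 != y2 -> [disjoint side y1 x & side y2 x].
Proof.
by move=> exy1 exy2 y12; rewrite disjoints_subset (sideC exy2) setCK side_nested.
Qed.

Lemma side_proper u v y : e u v -> e u y -> y != v -> side y u \proper side u v.
Proof.
move=> euv euy yv; apply/properP; split; first exact: side_nested.
by exists u; rewrite ?mem_side // (sideC euy) inE mem_side.
Qed.

Lemma side_around x z : z != x -> exists2 y, e x y & z \in side y x.
Proof.
case: tree_e => _ _ ce _ zx.
suff : z = x \/ exists2 y, e x y & z \in side y x by case=> // zx'; rewrite zx' eqxx in zx.
move: z {zx} (ce x z); apply: connect_ind_from => [|y z _ [->|[y0 exy0 y0y]] eyz]; first by left.
  by right; exists z; rewrite ?mem_side.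
case: (del_edgeP y0 x eyz) => [[_ ->]|[_ ->]|Dyz]; [by left|right; exists y0 => //..].
  exact: mem_side.
by move: y0y; rewrite !inE => /connect_trans; apply; apply: connect1.
Qed.

Lemma side_leaf u v : degree e u = 1 -> e u v -> side u v = [set u].
Proof.
move=> /eqP/cards1P[w Nu] euv.
have only_v y : e u y -> y = v.
  have nbr_w y' : e u y' -> y' = w by move=> euy'; apply/set1P; rewrite -Nu inE.
  by move=> /nbr_w ->; rewrite (nbr_w _ euv).
apply/setP => z; rewrite !inE; apply/idP/eqP => [|->]; last exact: connect0.
move: z; apply: connect_ind_from => // y z _ -> /andP[euz].
by rewrite (only_v z euz) !eqxx.
Qed.

End Tree.

Section Connectivity.
Variables (V : finType) (f : {set V} -> nat).
Hypothesis conn_f : connectivity_function f.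

Lemma conn0 : f set0 = 0.
Proof. by case: conn_f. Qed.

Lemma connC X : f (~: X) = f X.
Proof. by case: conn_f => _ fC _; rewrite fC setCK. Qed.

Lemma conn_submod X Y : f (X :|: Y) + f (X :&: Y) <= f X + f Y.
Proof. by case: conn_f. Qed.

Lemma conn_split A X : f A <= f (X :&: A) + f (~: X :&: A).
Proof.
have := conn_submod (X :&: A) (~: X :&: A).
by rewrite -setIUl setUCr setTI setIACA setICr set0I conn0 addn0.
Qed.

Lemma conn_cross X Y : f (X :&: Y) + f (~: X :&: ~: Y) <= f X + f Y.
Proof. by rewrite -setCU connC addnC conn_submod. Qed.

Variable W : {set V}.

Definition heavy (X : {set V}) : bool :=
  (f W <= f (X :&: W)) || (f W <= f (X :&: ~: W)).

Lemma heavy_setC X : heavy X -> heavy (~: X) -> f W <= 2 * f X.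
Proof.
(* Each crossing pair sums to at most f X + f W, each split pair to at least f W. *)
have cross1 := conn_cross X W.
have cross2 := conn_cross X (~: W); rewrite setCK connC in cross2.
have split1 := conn_split W X.
have split2 := conn_split (~: W) X; rewrite connC in split2.
by rewrite /heavy => /orP[] ? /orP[] ?; lia.
Qed.

Lemma heavy_set1 w : heavy [set w] -> f W <= f [set w].
Proof.
have le1 A : f ([set w] :&: A) <= f [set w].
  have [wA|wA] := boolP (w \in A); first by rewrite (setIidPl _) ?sub1set.
  by rewrite disjoint_setI0 ?disjoints1 ?conn0.
by move=> /orP[] /leq_trans; apply.
Qed.

Definition small_part (C : {set V}) : Prop :=
  [/\ 2 * f C < f W, f (C :&: W) < f W & f (C :&: ~: W) < f W].

Definition balanced_tripartition (C1 C2 C3 : {set V}) : Prop :=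
  [/\ [disjoint C1 & C2], [disjoint C1 & C3], [disjoint C2 & C3],
      C1 :|: C2 :|: C3 = setT &
      forall C : {set V}, C \in [:: C1; C2; C3] -> small_part C].

Lemma balanced_tripartitionI (C1 C2 C3 : {set V}) :
  [disjoint C1 & C2] -> [disjoint C1 & C3] -> [disjoint C2 & C3] ->
  C1 :|: C2 :|: C3 = setT ->
  small_part C1 -> small_part C2 -> small_part C3 ->
  balanced_tripartition C1 C2 C3.
Proof. by move=> *; split=> // C; rewrite !inE => /or3P[]/eqP->. Qed.

Lemma small_part_light C k : f C <= k -> 2 * k < f W -> ~~ heavy C -> small_part C.
Proof. by rewrite /heavy negb_or -!ltnNge => ? ? /andP[]; split=> //; lia. Qed.

Lemma small_part0 : 0 < f W -> small_part set0.
Proof. by split; rewrite ?set0I conn0. Qed.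

End Connectivity.

Lemma side_le_bd_width (V N : finType) (f : {set V} -> nat) (e : rel N) (L : V -> N) u v :
  e u v -> f (edge_side e L u v) <= bd_width f e L.
Proof. exact: (@leq_bigmax_cond _ (fun p : N * N => e p.1 p.2) _ (u, v)). Qed.

Section BranchDecomposition.
Variables (V N : finType) (e : rel N) (L : V -> N).
Hypotheses (tree_e : is_tree e) (deg13 : forall x, degree e x = 1 \/ degree e x = 3).
Hypotheses (L_inj : injective L) (leafP : forall x, degree e x = 1 <-> exists v, L v = x).

Local Notation S := (edge_side e L).

Lemma edge_sideE u v : S u v = L @^-1: side e u v.
Proof. by apply/setP => x; rewrite !inE. Qed.

Lemma edge_sideC u v : e u v -> S v u = ~: S u v.
Proof. by move=> euv; rewrite !edge_sideE (sideC tree_e euv) preimsetC. Qed.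

Lemma edge_side_leaf u v : degree e u = 1 -> e u v -> exists w, S u v = [set w].
Proof.
move=> du euv; have [w Lw] := (leafP u).1 du; exists w.
by apply/setP => x; rewrite edge_sideE (side_leaf du euv) !inE -Lw (inj_eq L_inj).
Qed.

Lemma edge_sides_disjoint x y1 y2 :
  e x y1 -> e x y2 -> y1 != y2 -> [disjoint S y1 x & S y2 x].
Proof.
move=> exy1 exy2 y12; rewrite -setI_eq0 !edge_sideE -preimsetI.
by rewrite (disjoint_setI0 (side_disjoint tree_e exy1 exy2 y12)) preimset0.
Qed.

Lemma edge_sides_cover u v a b :
  degree e u = 3 -> [set y | e u y] = [set v; a; b] -> S v u :|: S a u :|: S b u = setT.
Proof.
move=> du3 Nu; apply/setP => w; rewrite !inE.
have Lw_u : L w != u by apply/eqP => Lwu; have := (leafP u).2 (ex_intro _ w Lwu); rewrite du3.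
have [y euy] := side_around tree_e Lw_u; rewrite inE => wy.
have : y \in [set y | e u y] by rewrite inE.
by rewrite Nu !inE => /orP[/orP[]|]/eqP Ey; rewrite -Ey wy ?orbT.
Qed.

Lemma leaf_edge w : exists y, e (L w) y.
Proof.
have /cards1P[y Ny] : #|[set y | e (L w) y]| == 1 by apply/eqP/(leafP _).2; exists w.
by exists y; have : y \in [set y] := set11 y; rewrite -Ny inE.
Qed.

Variables (f : {set V} -> nat) (W : {set V}) (k : nat).
Hypotheses (conn_f : connectivity_function f) (width_k : forall u v, e u v -> f (S u v) <= k).
Hypothesis Wk : 2 * k < f W.

Lemma leaf_side_light u v : degree e u = 1 -> e u v -> ~~ heavy f W (S u v).
Proof.
move=> du euv; have [w Sw] := edge_side_leaf du euv.
by apply/negP; rewrite Sw => /(heavy_set1 conn_f); have := width_k euv; rewrite Sw; lia.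
Qed.

Lemma light_side_small u v : e u v -> ~~ heavy f W (S u v) -> small_part f W (S u v).
Proof. by move=> euv; apply: small_part_light (width_k euv) Wk. Qed.

Lemma heavy_side_tripartition u v : e u v -> heavy f W (S u v) ->
  exists C1 C2 C3, balanced_tripartition f W C1 C2 C3.
Proof.
have [se _ _ _] := tree_e.
have [n] := ubnP #|side e u v|; elim: n u v => // n IH u v lt_n euv heavy_uv.
have du3 : degree e u = 3.
  by case: (deg13 u) => // du1; rewrite (negbTE (leaf_side_light du1 euv)) in heavy_uv.
have vNu : v \in [set y | e u y] by rewrite inE.
have [a [b [av bv ab Nu]]] := card3_setD1 du3 vNu.
have eu y : e u y = (y \in [set v; a; b]) by rewrite -Nu inE.
have [eua eub] : e u a /\ e u b by rewrite !eu !inE !eqxx !orbT.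
have descend y : e u y -> y != v -> heavy f W (S y u) ->
    exists C1 C2 C3, balanced_tripartition f W C1 C2 C3.
  move=> euy yv; apply: IH; last by rewrite se.
  exact: leq_trans (proper_card (side_proper tree_e euv euy yv)) lt_n.
have [/(descend a eua av) //|light_a] := boolP (heavy f W (S a u)).
have [/(descend b eub bv) //|light_b] := boolP (heavy f W (S b u)).
have light_v : ~~ heavy f W (S v u).
  apply/negP; rewrite (edge_sideC euv) => /(heavy_setC conn_f heavy_uv).
  by have := width_k euv; lia.
exists (S v u), (S a u), (S b u); apply: balanced_tripartitionI.
- by apply: edge_sides_disjoint; rewrite // eq_sym.
- by apply: edge_sides_disjoint; rewrite // eq_sym.
- exact: edge_sides_disjoint.
- exact: edge_sides_cover Nu.
- by apply: light_side_small; rewrite // se.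
- by apply: light_side_small; rewrite // se.
- by apply: light_side_small; rewrite // se.
Qed.

Lemma edge_tripartition u v : e u v ->
  exists C1 C2 C3, balanced_tripartition f W C1 C2 C3.
Proof.
have [se _ _ _] := tree_e; move=> euv.
have [/(heavy_side_tripartition euv) //|light_uv] := boolP (heavy f W (S u v)).
have evu : e v u by rewrite se.
have [/(heavy_side_tripartition evu) //|light_vu] := boolP (heavy f W (S v u)).
exists (S u v), (S v u), set0; apply: balanced_tripartitionI.
- by rewrite (edge_sideC euv) disjoints_subset setCK.
- by rewrite -setI_eq0 setI0.
- by rewrite -setI_eq0 setI0.
- by rewrite setU0 (edge_sideC euv) setUCr.
- exact: light_side_small.
- exact: light_side_small.
- by apply: small_part0 => //; lia.
Qed.

End BranchDecomposition.

Theorem theorem3 (V : finType) (f : {set V} -> nat) (k : nat) (W : {set V}) :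
  connectivity_function f ->
  is_branchwidth f k ->
  (2 * k < f W)%N ->
  exists C1 C2 C3 : {set V},
    [/\ [disjoint C1 & C2], [disjoint C1 & C3], [disjoint C2 & C3],
        C1 :|: C2 :|: C3 = setT &
        forall C : {set V}, C \in [:: C1; C2; C3] ->
          [/\ (2 * f C < f W)%N, (f (C :&: W) < f W)%N & (f (C :&: ~: W) < f W)%N]].
Proof.
move=> conn_f [[N [e [L [[tree_e deg13 L_inj leafP] width_eq]]]] _] Wk.
have width_k u v : e u v -> f (edge_side e L u v) <= k.
  by rewrite -width_eq; apply: side_le_bd_width.
have [w _] : exists w, w \in W.
  by apply/set0Pn; apply: contraTneq Wk => ->; rewrite (conn0 conn_f) -leqNgt.
have [y ey] := leaf_edge leafP w.
have [C1 [C2 [C3 tri]]] := edge_tripartition tree_e deg13 L_inj leafP conn_f width_k Wk ey.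
by exists C1, C2, C3.
Qed.
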